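(* (i) Let $n\ge 2$ and let $G$ be an induced subgraph of $Q_n$ with at least $2^{n-1}+1$ vertices. Then some vertex $v$ of $G$ satisfies $\deg_G(v)>\tfrac12\log_2 n-\tfrac12\log_2\log_2 n+\tfrac12$. (ii) For every $n\ge1$ there exists an induced subgraph $G$ of $Q_n$ with exactly $2^{n-1}+1$ vertices such that $\Delta(G)<\sqrt{n}+1$.
   Context: $Q_n$ is the $n$-dimensional hypercube graph on $\{0,1\}^n$, two vertices adjacent iff they differ in exactly one coordinate. $\Delta(G)$ denotes the maximum degree of $G$. *)

From mathcomp Require Import all_boot.
From Stdlib Require Import Reals.

Set Implicit Arguments.
Unset Strict Implicit.
Unset Printing Implicit Defensive.

Definition cube (n : nat) : finType := {ffun 'I_n -> bool}.

Definition hadj (n : nat) (u v : cube n) : bool :=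
  #|[set i : 'I_n | u i != v i]| == 1%N.

(* An induced subgraph of Q_n is given by its vertex set S.
   Degree of v in the induced subgraph Q_n[S]. *)
Definition deg (n : nat) (S : {set cube n}) (v : cube n) : nat :=
  #|[set u in S | hadj u v]|.

Definition maxdeg (n : nat) (S : {set cube n}) : nat :=
  \max_(v in S) deg S v.

Definition log2 (x : R) : R := (ln x / ln 2)%R.

(* Part (i) is Huang's sensitivity theorem.  Signing the edges of Q_n so that every
   square carries an odd number of negative edges gives an operator [sadj] with
   [sadj^2 = n].  For [lam = sqrt n], every [sadj C + lam C] is a [lam]-eigenfunction;
   letting [C] range over functions supported on a half-cube gives 2^(n-1) unknowns,
   more than the vertices outside S, so some nonzero eigenfunction vanishes outside S.
   At a vertex x of S maximising its modulus, [lam |v x| = |sadj v x| <= deg_S x |v x|].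
   Finally [sqrt n] exceeds the logarithmic bound of the statement.

   Part (ii) is the construction of Chung, Furedi, Graham and Seymour.  Split the
   coordinates into m blocks of size at most m, where m is the least integer
   with n <= m^2, let g x say that some block of x is all ones, and take
   S = {x | g x = parity x + c}.  The neighbours of x in S are the flips changing g:
   they lie in a single full block, or are the unique zeros of distinct blocks, so
   there are at most m of them.  A fixed-point-free involution flipping one
   coordinate and preserving g off two exceptional points of S matches the rest of S
   with its complement, whence |S| = 2^(n-1) + 1. *)

From Stdlib Require Import Reals Lra.

Section RealBounds.
Local Open Scope R_scope.

Lemma ln_le_sub1 y : 0 < y -> ln y <= y - 1.
Proof. intros Hy; pose proof (exp_ineq1_le (ln y)) as H; rewrite exp_ln in H; lra. Qed.

Lemma ln_le x y : 0 < x -> x <= y -> ln x <= ln y.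
Proof. intros Hx [Hxy | <-]; [left; apply ln_increasing |]; lra. Qed.

Lemma log2_nonneg x : 1 <= x -> 0 <= log2 x.
Proof.
intros Hx; pose proof ln_lt_2; unfold log2, Rdiv.
apply Rmult_le_pos; [rewrite <- ln_1; apply ln_le; lra | left; apply Rinv_0_lt_compat; lra].
Qed.

Lemma one_le_log2 x : 2 <= x -> 1 <= log2 x.
Proof.
intros Hx; pose proof ln_lt_2; unfold log2.
rewrite <- (Rdiv_diag (ln 2)) by lra.
apply Rmult_le_compat_r; [left; apply Rinv_0_lt_compat; lra | apply ln_le; lra].
Qed.

Lemma ln2_gt_3_5 : 3 / 5 < ln 2.
Proof.
assert (He3 : exp 3 < 2 ^ 5).
{ replace 3 with (1 + 1 + 1) by ring; rewrite !exp_plus.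
  pose proof exp_le_3; pose proof (exp_pos 1); simpl; nra. }
apply ln_increasing in He3; [|apply exp_pos].
rewrite ln_exp, ln_pow in He3 by lra; simpl INR in He3; lra.
Qed.

(* With [s] the fourth root of [x]:
   [ln x = 4 ln s <= 4 (s - 1) < 3/5 (2 s^2 - 1) < (2 s^2 - 1) ln 2]. *)
Lemma log2_lt_2sqrt_sub1 x : 1 <= x -> log2 x < 2 * sqrt x - 1.
Proof.
intros Hx; pose proof ln2_gt_3_5 as Hln2.
set (s := sqrt (sqrt x)).
assert (Hs : 1 <= s).
{ assert (Hge1 : forall y, 1 <= y -> 1 <= sqrt y)
    by (intros y Hy; rewrite <- sqrt_1; apply sqrt_le_1_alt; lra).
  apply Hge1, Hge1, Hx. }
assert (Hss : s * s = sqrt x) by (apply sqrt_sqrt, sqrt_pos).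
assert (Hx4 : x = s ^ 4) by (simpl; rewrite Rmult_1_r, <- Rmult_assoc, Hss; symmetry; apply sqrt_sqrt; lra).
assert (Hln : ln x <= 4 * (s - 1)).
{ rewrite Hx4, ln_pow by lra; pose proof (ln_le_sub1 s); simpl INR; lra. }
assert (ln x < (2 * sqrt x - 1) * ln 2).
{ rewrite <- Hss.
  assert (0 <= (s - 5 / 3) * (s - 5 / 3)) by apply Rle_0_sqr.
  assert (0 < (2 * (s * s) - 1) * (ln 2 - 3 / 5)) by (apply Rmult_lt_0_compat; nra).
  nra. }
apply (Rmult_lt_reg_r (ln 2)); [lra|].
unfold log2, Rdiv; rewrite Rmult_assoc, Rinv_l, Rmult_1_r; lra.
Qed.

Lemma half_log2_bound_lt_sqrt x : 2 <= x ->
  / 2 * log2 x - / 2 * log2 (log2 x) + / 2 < sqrt x.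
Proof.
intros Hx; pose proof (log2_lt_2sqrt_sub1 x); pose proof (log2_nonneg (log2 x)).
pose proof (one_le_log2 x); lra.
Qed.

Lemma INR_lt_sqrt_add1 k n : (k * k < n)%nat -> INR (S k) < sqrt (INR n) + 1.
Proof.
intros Hk; rewrite S_INR.
enough (INR k < sqrt (INR n)) by lra.
rewrite <- (sqrt_square (INR k)) by apply pos_INR.
apply sqrt_lt_1_alt; rewrite <- mult_INR; split; [apply pos_INR | apply lt_INR; exact Hk].
Qed.

Lemma two_le_INR n : (2 <= n)%nat -> 2 <= INR n.
Proof. intros H; apply le_INR in H; simpl in H; lra. Qed.

End RealBounds.

From mathcomp Require Import all_boot all_order all_algebra.
From mathcomp Require Import Rstruct zify ring.

Set Implicit Arguments.
Unset Strict Implicit.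
Unset Printing Implicit Defensive.
Import Order.TTheory GRing.Theory Num.Theory.

Section Flip.
Variable n : nat.
Implicit Types (x u : cube n) (i j : 'I_n).

Definition flip x i : cube n := [ffun j => if j == i then ~~ x j else x j].

Lemma flipE x i j : flip x i j = if j == i then ~~ x j else x j.
Proof. by rewrite ffunE. Qed.

Lemma flipK x i : flip (flip x i) i = x.
Proof. by apply/ffunP=> j; rewrite !flipE; case: eqP => // ->; rewrite negbK. Qed.

Lemma flipC x i j : flip (flip x i) j = flip (flip x j) i.
Proof. by apply/ffunP=> k; rewrite !flipE; case: (k =P j); case: (k =P i). Qed.

Lemma flip_inj x : injective (flip x).
Proof.
move=> i j /ffunP /(_ i); rewrite !flipE eqxx; case: eqP => // _.
by case: (x i).
Qed.

Lemma hadj_flip x i : hadj (flip x i) x.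
Proof.
rewrite /hadj -(cards1 i); apply/eqP/eq_card => j; rewrite !inE flipE.
by case: (j =P i) => [->|_]; [case: (x i) | rewrite eqxx].
Qed.

Lemma hadjP u x : hadj u x -> exists i, u = flip x i.
Proof.
move=> /cards1P [i /setP Hi]; exists i; apply/ffunP=> j.
move: (Hi j); rewrite !inE flipE.
case: (j =P i) => [-> | _] /=; first by case: (u i); case: (x i).
by move/negbFE/eqP.
Qed.

Lemma deg_flip (S : {set cube n}) x : deg S x = #|[set i | flip x i \in S]|.
Proof.
rewrite /deg -(card_imset _ (@flip_inj x)); apply: eq_card => u.
rewrite inE; apply/andP/imsetP => [[uS /hadjP [i ui]] | [i]].
  by exists i; rewrite // inE -ui.
by rewrite inE => xiS ->; rewrite hadj_flip.
Qed.

Definition weight x := #|[set j | x j]|.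

Lemma odd_weight_flip x i : odd (weight (flip x i)) = ~~ odd (weight x).
Proof.
rewrite /weight; case Hx: (x i).
- have -> : [set j | flip x i j] = [set j | x j] :\ i.
    by apply/setP=> j; rewrite !inE flipE; case: (j =P i) => [->|]; rewrite ?Hx.
  by rewrite (cardsD1 i [set j | x j]) inE Hx negbK.
- have -> : [set j | flip x i j] = i |: [set j | x j].
    by apply/setP=> j; rewrite !inE flipE; case: (j =P i) => [->|]; rewrite ?Hx.
  by rewrite cardsU1 inE Hx.
Qed.

Lemma card_cube : #|cube n| = 2 ^ n.
Proof. by rewrite card_ffun card_bool card_ord. Qed.

Lemma card_coord_true i : #|[set x : cube n | x i]| = 2 ^ n.-1.
Proof.
have halves : #|[set x : cube n | x i]| = #|~: [set x : cube n | x i]|.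
  have flip_iK : cancel (flip^~ i) (flip^~ i) := flipK^~ i.
  rewrite -[RHS](card_imset _ (can_inj flip_iK)); apply: eq_card => y.
  rewrite !inE; apply/idP/imsetP => [yi | [x]].
    by exists (flip y i); rewrite ?flipK // !inE flipE eqxx yi.
  by rewrite !inE => xi ->; rewrite flipE eqxx xi.
have := cardsC [set x : cube n | x i]; rewrite -halves card_cube.
have : 2 ^ n = 2 * 2 ^ n.-1 by rewrite -expnS prednK //; apply: leq_ltn_trans (ltn_ord i).
lia.
Qed.

End Flip.

Local Open Scope ring_scope.

Section SignedAdjacency.
Variables (R : numDomainType) (n : nat).
Implicit Types (x y z : cube n) (i j : 'I_n) (f : cube n -> R).

Definition sgn x i : R := (-1) ^+ odd #|[set j : 'I_n | (j < i)%N && x j]|.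

Lemma sgn_flip x i j :
  sgn (flip x i) j = if (i < j)%N then - sgn x j else sgn x j.
Proof.
rewrite /sgn; case: ltnP => [ij | ji]; last first.
  congr (_ ^+ odd _); apply: eq_card => k; rewrite !inE flipE.
  by case: (k =P i) => // ->; rewrite ltnNge ji.
rewrite -signrN; congr (_ ^+ _).
case Hx: (x i).
- have -> : [set k : 'I_n | (k < j)%N && flip x i k] =
            [set k : 'I_n | (k < j)%N && x k] :\ i.
    by apply/setP=> k; rewrite !inE flipE; case: (k =P i) => [->|]; rewrite ?Hx ?andbF ?andbT.
  by rewrite (cardsD1 i [set k : 'I_n | (k < j)%N && x k]) inE ij Hx negbK.
- have -> : [set k : 'I_n | (k < j)%N && flip x i k] =
            i |: [set k : 'I_n | (k < j)%N && x k].
    by apply/setP=> k; rewrite !inE flipE; case: (k =P i) => [->|]; rewrite ?Hx ?ij.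
  by rewrite cardsU1 inE ij Hx.
Qed.

Lemma sgn_mulss x i : sgn x i * sgn x i = 1.
Proof. by rewrite /sgn -signr_addb addbb. Qed.

Lemma normr_sgn x i : `|sgn x i| = 1.
Proof. by rewrite /sgn normr_sign. Qed.

Definition sadj f x : R := \sum_i sgn x i * f (flip x i).

Lemma sadj_lin (I : Type) (r : seq I) (c : I -> R) (g : I -> cube n -> R) x :
  sadj (fun y => \sum_(u <- r) c u * g u y) x = \sum_(u <- r) c u * sadj (g u) x.
Proof.
rewrite /sadj; under eq_bigr do rewrite mulr_sumr.
rewrite exchange_big /=; apply: eq_bigr => u _.
by rewrite mulr_sumr; apply: eq_bigr => i _; rewrite mulrCA.
Qed.

Lemma sadjD f g a x : sadj (fun y => f y + a * g y) x = sadj f x + a * sadj g x.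
Proof.
rewrite /sadj mulr_sumr -big_split /=; apply: eq_bigr => i _.
by rewrite mulrDr mulrCA.
Qed.

(* The two-step walks [x -> flip x i -> flip (flip x i) j] with [i != j] cancel
   in pairs, since the squares of Q_n are signed anticommutatively. *)
Lemma sadj_sadj f x : sadj (sadj f) x = n%:R * f x.
Proof.
pose T i j := sgn x i * sgn (flip x i) j * f (flip (flip x i) j).
pose U i j := if i == j then 0 else T i j.
have sum_diag i : sgn x i * sadj f (flip x i) = f x + \sum_j U i j.
  rewrite /sadj mulr_sumr (bigD1 i) //= [X in _ = _ + X](bigD1 i) //= /U eqxx add0r.
  rewrite mulrA sgn_flip ltnn sgn_mulss mul1r flipK; congr (_ + _).
  by apply: eq_bigr => j /negbTE; rewrite eq_sym => ->; rewrite /T mulrA.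
have T_anti i j : (i < j)%N -> T i j = - T j i.
  move=> ij; rewrite /T !sgn_flip ij ltnNge (ltnW ij) /= flipC.
  by rewrite mulrN mulNr [sgn x j * _]mulrC.
have U_anti i j : U i j = - U j i.
  rewrite /U eq_sym; case: eqP => [_|/eqP ne]; first by rewrite oppr0.
  case: (ltngtP i j) => [ij|ji|/val_inj eij]; first exact: T_anti.
    by rewrite (T_anti _ _ ji) opprK.
  by rewrite eij eqxx in ne.
have U0 : \sum_i \sum_j U i j = 0.
  apply/eqP; rewrite -eqNr -sumrN exchange_big /=; apply/eqP/eq_bigr => j _.
  by rewrite -sumrN; apply: eq_bigr => i _; rewrite U_anti opprK.
rewrite /sadj; under eq_bigr do rewrite sum_diag.
by rewrite big_split /= U0 addr0 sumr_const card_ord mulr_natl.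
Qed.

Lemma sadj_supported f i0 z : (forall y, ~~ y i0 -> f y = 0) -> ~~ z i0 ->
  sadj f z = sgn z i0 * f (flip z i0).
Proof.
move=> f0 zi0; rewrite /sadj (bigD1 i0) //= big1 ?addr0 // => i ne.
by rewrite f0 ?mulr0 // flipE eq_sym (negbTE ne).
Qed.

End SignedAdjacency.

Lemma exists_nontrivial_solution (F : fieldType) (I J : finType) (K : I -> J -> F) :
  (#|J| < #|I|)%N ->
  exists2 c : I -> F, exists i, c i != 0 & forall j, \sum_i c i * K i j = 0.
Proof.
move=> JI.
pose M := \matrix_(a < #|I|, b < #|J|) K (enum_val a) (enum_val b).
have kerM_neq0 : kermx M != 0.
  rewrite -mxrank_eq0 mxrank_ker subn_eq0 -ltnNge.
  exact: leq_ltn_trans (rank_leq_col M) JI.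
have /existsP [a /existsP [b kerM_ab]] : [exists a, exists b, kermx M a b != 0].
  apply: contraR kerM_neq0 => /existsPn h; apply/eqP/matrixP => a b.
  by move: (h a) => /existsPn /(_ b) /negPn /eqP ->; rewrite mxE.
exists (fun u => kermx M a (enum_rank u)); first by exists (enum_val b); rewrite enum_valK.
move=> j; rewrite (reindex (@enum_val I I)) /=; last first.
  by case: (enum_val_bij I) => g h1 h2; exists g => y _; [exact: h1 | exact: h2].
transitivity ((kermx M *m M) a (enum_rank j)); last by rewrite mulmx_ker mxE.
rewrite mxE; apply: eq_bigr => k _; rewrite enum_valK.
by congr (_ * _); rewrite mxE enum_rankK.
Qed.

Section Huang.
Variables (R : realFieldType) (n : nat) (lam : R).
Implicit Types (S : {set cube n}) (v : cube n -> R) (x y : cube n).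

Lemma eigenvalue_le_deg S v : 0 <= lam ->
  (exists x, v x != 0) -> (forall y, y \notin S -> v y = 0) ->
  (forall x, sadj v x = lam * v x) ->
  exists2 x, x \in S & lam <= (deg S x)%:R.
Proof.
move=> lam_ge0 [z vz] vS eig.
have [x _ vx_max] := @arg_maxP _ _ _ z predT (fun y => `|v y|) isT.
have vx_gt0 : 0 < `|v x| by apply: lt_le_trans (vx_max z isT); rewrite normr_gt0.
have xS : x \in S.
  by apply: contraLR vx_gt0 => /vS ->; rewrite normr0 ltxx.
exists x => //.
rewrite -(ler_pM2r vx_gt0) -[lam]ger0_norm // -normrM -eig /sadj deg_flip.
apply: le_trans (ler_norm_sum _ _ _) _.
rewrite -sum1_card natr_sum mulr_suml [in X in _ <= X]big_mkcond /=.
apply: ler_sum => i _; rewrite normrM normr_sgn mul1r inE.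
case: (boolP (flip x i \in S)) => [_|/vS ->]; last by rewrite normr0.
by rewrite mul1r; apply: vx_max.
Qed.

Hypothesis lam2 : lam ^+ 2 = n%:R.

Lemma sadj_eigen (f : cube n -> R) x :
  sadj (fun y => sadj f y + lam * f y) x = lam * (sadj f x + lam * f x).
Proof. by rewrite sadjD sadj_sadj -lam2; ring. Qed.

Lemma exists_eigenfunction S : (2 ^ n.-1 < #|S|)%N ->
  exists v, [/\ exists x, v x != 0, forall y, y \notin S -> v y = 0
              & forall x, sadj v x = lam * v x].
Proof.
move=> HS.
have n_gt0 : (0 < n)%N.
  by move: (leq_trans HS (max_card S)); rewrite card_cube ltn_exp2l // ltn_predL.
pose i0 : 'I_n := Ordinal n_gt0.
pose I : finType := {x : cube n | x i0}.
pose J : finType := {y : cube n | y \notin S}.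
have card_JI : (#|J| < #|I|)%N.
  have -> : #|I| = (2 ^ n.-1)%N.
    by rewrite card_sig -(card_coord_true i0); apply: eq_card => x; rewrite inE.
  have -> : #|J| = (2 ^ n - #|S|)%N.
    by rewrite card_sig -card_cube -(cardsC S) addKn; apply: eq_card => x; rewrite !inE.
  have : (2 ^ n = 2 * 2 ^ n.-1)%N by rewrite -expnS prednK.
  lia.
pose delta (u : I) y : R := (y == val u)%:R.
pose K (u : I) y := sadj (delta u) y + lam * delta u y.
have [c [u0 cu0] cK] := exists_nontrivial_solution (fun u (y : J) => K u (val y)) card_JI.
pose C y := \sum_u c u * delta u y.
have C_supp y : ~~ y i0 -> C y = 0.
  move=> yi0; apply: big1 => u _; rewrite /delta.
  by case: eqP => [yu|]; [move: (valP u); rewrite -yu (negbTE yi0) | rewrite mulr0].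
have C_val u : C (val u) = c u.
  rewrite /C (bigD1 u) //= big1 ?addr0 => [|u' u'u]; first by rewrite /delta eqxx mulr1.
  by rewrite /delta (inj_eq val_inj) eq_sym (negbTE u'u) mulr0.
exists (fun y => sadj C y + lam * C y); split.
- have zi0 : ~~ flip (val u0) i0 i0 by rewrite flipE eqxx (valP u0).
  exists (flip (val u0) i0).
  rewrite (C_supp _ zi0) mulr0 addr0 (sadj_supported C_supp zi0) flipK C_val.
  by rewrite mulf_neq0 // signr_eq0.
- move=> y yS; rewrite -(cK (exist _ y yS)) /= sadj_lin mulr_sumr -big_split /=.
  by apply: eq_bigr => u _; rewrite mulrDr mulrCA.
- exact: sadj_eigen.
Qed.

Lemma huang S : 0 <= lam -> (2 ^ n.-1 < #|S|)%N ->
  exists2 x, x \in S & lam <= (deg S x)%:R.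
Proof.
move=> lam_ge0 /exists_eigenfunction [v [v_neq0 vS eig]].
exact: eigenvalue_le_deg v_neq0 vS eig.
Qed.

End Huang.

Lemma huang_sqrt n (S : {set cube n}) : (2 ^ n.-1 < #|S|)%N ->
  exists2 x, x \in S & Rle (sqrt (INR n)) (INR (deg S x)).
Proof.
move=> HS.
have sqrt_n2 : sqrt (INR n) ^+ 2 = n%:R.
  by rewrite expr2 -INRE; apply: sqrt_sqrt; apply: pos_INR.
have sqrt_n_ge0 : 0 <= sqrt (INR n) by apply/RleP; apply: sqrt_pos.
have [x xS deg_x] := huang sqrt_n2 sqrt_n_ge0 HS.
by exists x => //; apply/RleP; rewrite (INRE (deg S x)).
Qed.

Local Close Scope ring_scope.

Lemma card_swap (T : finType) (f : T -> T) (A B : {set T}) : involutive f ->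
  {in A, forall x, f x \in B} -> {in B, forall x, f x \in A} -> #|A| = #|B|.
Proof.
move=> fK AB BA.
have le_card (C D : {set T}) : {in C, forall x, f x \in D} -> #|C| <= #|D|.
  move=> CD; rewrite -(card_imset _ (inv_inj fK)).
  by apply/subset_leq_card/subsetP => _ /imsetP [x Cx ->]; apply: CD.
by apply/eqP; rewrite eqn_leq !le_card.
Qed.

Section BlockConstruction.
Variables (n k : nat) (blk : 'I_n -> 'I_k) (rep : 'I_k -> 'I_n).
Hypothesis repK : cancel rep blk.
Implicit Types (x y : cube n) (i j : 'I_n) (b : 'I_k).

Definition full_block x b := [forall i, (blk i == b) ==> x i].
Definition has_full_block x := [exists b, full_block x b].
Definition base : cube n := [ffun i => rep (blk i) != i].
Definition cfgs : {set cube n} :=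
  [set x | has_full_block x == odd (weight x) (+) odd (weight base)].

Lemma full_block_flip x i b : blk i != b -> full_block (flip x i) b = full_block x b.
Proof.
move=> ib; apply: eq_forallb => j; rewrite flipE.
by case: (j =P i) => // ->; rewrite (negbTE ib).
Qed.

Lemma flip_cfgs x i : (flip x i \in cfgs) =
  (x \in cfgs) (+) (has_full_block (flip x i) == has_full_block x).
Proof.
rewrite !inE odd_weight_flip.
by case: (has_full_block (flip x i)); case: (has_full_block x);
  case: (odd (weight x)); case: (odd (weight base)).
Qed.

Lemma deg_cfgs_full x b : x \in cfgs -> full_block x b ->
  deg cfgs x <= #|[set i | blk i == b]|.
Proof.
move=> xS xb; rewrite deg_flip; apply/subset_leq_card/subsetP => i.
rewrite inE flip_cfgs xS /= inE; apply: contraR => ib.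
have -> : has_full_block x by apply/existsP; exists b.
by rewrite eqb_id; apply/existsP; exists b; rewrite full_block_flip.
Qed.

Lemma full_block_flipP x i b : ~~ full_block x b -> full_block (flip x i) b ->
  blk i = b /\ forall j, blk j = b -> x j = (j != i).
Proof.
move=> nxb fxb; have ib : blk i = b.
  by apply/eqP; apply: contraNT nxb => ib; rewrite -(full_block_flip x ib).
split=> // j jb; move/forallP: fxb => /(_ j); rewrite jb eqxx flipE /=.
by case: (j =P i) => [->|_] //= /negbTE.
Qed.

Lemma deg_cfgs_nofull x : x \in cfgs -> ~~ has_full_block x -> deg cfgs x <= k.
Proof.
move=> xS nfx; rewrite deg_flip.
set P := [set i | flip x i \in cfgs].
have sens i : i \in P -> exists2 b, blk i = b & forall j, blk j = b -> x j = (j != i).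
  rewrite inE flip_cfgs xS (negbTE nfx) /= eqbF_neg negbK => /existsP [b fb].
  have nxb : ~~ full_block x b by apply: contra nfx => xb; apply/existsP; exists b.
  by have [ib xb] := full_block_flipP nxb fb; exists b.
have blk_inj : {in P &, injective blk}.
  move=> i j /sens [b ib xi] /sens [b' jb' xj] ij.
  by have := xi j (etrans (esym ij) ib); rewrite xj // eqxx => /esym /negbFE /eqP ->.
rewrite -(card_in_imset blk_inj); apply: leq_trans (max_card _) _.
by rewrite card_ord.
Qed.

Lemma maxdeg_cfgs m : (forall b, #|[set i | blk i == b]| <= m) ->
  maxdeg cfgs <= maxn k m.
Proof.
move=> card_blk; apply/bigmax_leqP => x xS.
rewrite leq_max; case: (boolP (has_full_block x)) => [/existsP [b xb] | nfx].
  by rewrite (leq_trans (deg_cfgs_full xS xb) (card_blk b)) orbT.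
by rewrite deg_cfgs_nofull.
Qed.

Section Pairing.
Variable b0 : 'I_k.

Definition bad_block x b := [exists i, [&& blk i == b, i != rep b & ~~ x i]].
Definition pivot x : 'I_n := rep (odflt b0 [pick b | bad_block x b]).
Definition pair_flip x := flip x (pivot x).
Definition exceptional : {set cube n} := [set base; flip base (rep b0)].

Lemma bad_block_flip_rep x b b' : bad_block (flip x (rep b')) b = bad_block x b.
Proof.
apply: eq_existsb => i; rewrite flipE; case: (i =P rep b') => // ->.
by rewrite repK; case: (b' =P b) => [->|]; rewrite ?eqxx.
Qed.

Lemma pivot_pair_flip x : pivot (pair_flip x) = pivot x.
Proof. by rewrite /pivot (eq_pick (bad_block_flip_rep x ^~ _)). Qed.

Lemma pair_flipK : involutive pair_flip.
Proof. by move=> x; rewrite {1}/pair_flip pivot_pair_flip flipK. Qed.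

Lemma full_block_flip_bad x b b' :
  bad_block x b -> full_block (flip x (rep b)) b' = full_block x b'.
Proof.
move=> /existsP [i /and3P [/eqP ib irep xi]].
case: (b =P b') => [<- | /eqP ne]; last by rewrite full_block_flip // repK.
have nfull y : ~~ y i -> full_block y b = false.
  by move=> yi; apply/negbTE/forallP => /(_ i); rewrite ib eqxx (negbTE yi).
by rewrite !nfull // flipE (negbTE irep).
Qed.

Lemma exceptionalP x : (forall i, rep (blk i) != i -> x i) ->
  (forall b, b != b0 -> ~~ x (rep b)) -> x \in exceptional.
Proof.
move=> ones zeros.
have agree i : i != rep b0 -> x i = base i.
  move=> ne; rewrite ffunE; case: (rep (blk i) =P i) => [ri | /eqP nri]; last exact: ones.
  apply/negbTE; rewrite -ri; apply: zeros; apply: contra ne => /eqP ib.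
  by rewrite -ri ib.
rewrite !inE; case x0: (x (rep b0)); apply/orP; [right | left];
  apply/eqP/ffunP => i; rewrite ?flipE;
  by case: (i =P rep b0) => [-> | /eqP /agree -> //]; rewrite x0 ffunE repK eqxx.
Qed.

Lemma has_full_block_pair_flip x : x \notin exceptional ->
  has_full_block (pair_flip x) = has_full_block x.
Proof.
move=> xE; rewrite /pair_flip /pivot; case: pickP => [b bad | nbad] /=.
  by apply: eq_existsb => b'; apply: full_block_flip_bad.
have ones i : rep (blk i) != i -> x i.
  move=> irep; apply: contraR (negbT (nbad (blk i))) => xi.
  by apply/existsP; exists i; rewrite eqxx eq_sym irep xi.
have [b bb0 xb] : exists2 b, b != b0 & x (rep b).
  case: (pickP (fun b => (b != b0) && x (rep b))) => [b /andP [] | none];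
    first by exists b.
  case/negP: xE; apply: exceptionalP => // b bb0.
  by move: (none b); rewrite bb0 => /negbT.
have xfull : full_block x b.
  apply/forallP => i; apply/implyP => /eqP ib.
  by case: (rep (blk i) =P i) => [<- | /eqP /ones //]; rewrite ib.
have -> : has_full_block x by apply/existsP; exists b.
by apply/existsP; exists b; rewrite full_block_flip // repK eq_sym.
Qed.

Lemma pair_flip_cfgs x : x \notin exceptional ->
  (pair_flip x \in cfgs) = ~~ (x \in cfgs).
Proof.
by move=> xE; rewrite flip_cfgs -/(pair_flip x) has_full_block_pair_flip // eqxx addbT.
Qed.

Lemma has_full_block_base : has_full_block base = false.
Proof.
apply/negbTE/existsPn => b; apply/forallPn; exists (rep b).
by rewrite ffunE !repK !eqxx.
Qed.

Lemma full_block_flip_base : full_block (flip base (rep b0)) b0.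
Proof.
apply/forallP => i; apply/implyP => /eqP ib; rewrite flipE ffunE ib.
by case: (i =P rep b0) => [->|/eqP ne]; rewrite ?repK ?eqxx // eq_sym.
Qed.

Lemma exceptional_sub_cfgs : exceptional \subset cfgs.
Proof.
apply/subsetP => x; rewrite !inE => /orP [] /eqP ->.
  by rewrite has_full_block_base addbb.
have -> : has_full_block (flip base (rep b0)).
  by apply/existsP; exists b0; apply: full_block_flip_base.
by rewrite odd_weight_flip; case: odd.
Qed.

Lemma pair_flip_base : pair_flip base = flip base (rep b0).
Proof.
rewrite /pair_flip /pivot; case: pickP => [b /existsP [i /and3P [/eqP ib irep]] | //].
by rewrite ffunE ib eq_sym irep.
Qed.

Lemma pair_flip_exceptional x : (pair_flip x \in exceptional) = (x \in exceptional).
Proof.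
have closed y : y \in exceptional -> pair_flip y \in exceptional.
  rewrite !inE => /orP [] /eqP ->; first by rewrite pair_flip_base eqxx orbT.
  by rewrite -pair_flip_base pair_flipK eqxx.
by apply/idP/idP => [/closed | /closed //]; rewrite pair_flipK.
Qed.

Lemma card_cfgs : #|cfgs| = (2 ^ n.-1 + 1)%N.
Proof.
have card_exc : #|exceptional| = 2.
  rewrite cards2; suff -> : base != flip base (rep b0) by [].
  by apply/eqP => /ffunP /(_ (rep b0)); rewrite flipE eqxx; case: (base _).
have swap : #|cfgs :\: exceptional| = #|~: cfgs|.
  apply: (card_swap pair_flipK) => x; rewrite ?in_setD in_setC.
    by case/andP => xE xS; rewrite pair_flip_cfgs // xS.
  move=> xS; have xE := contraNN (subsetP exceptional_sub_cfgs x) xS.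
  by rewrite pair_flip_exceptional xE pair_flip_cfgs.
have := cardsID exceptional cfgs; rewrite (setIidPr exceptional_sub_cfgs) card_exc swap.
have := cardsC cfgs; rewrite card_cube.
have : 2 ^ n = 2 * 2 ^ n.-1 by rewrite -expnS prednK //; apply: leq_ltn_trans (ltn_ord (rep b0)).
lia.
Qed.

End Pairing.

End BlockConstruction.

(* Blocks are the residue classes mod [m], represented by their least elements. *)
Lemma exists_cfgs_mod n m : 0 < m -> m <= n -> n <= m * m ->
  exists S : {set cube n}, #|S| = (2 ^ n.-1 + 1)%N /\ maxdeg S <= m.
Proof.
move=> m_gt0 mn nmm.
pose blk (i : 'I_n) : 'I_m := Ordinal (ltn_pmod i m_gt0).
pose rep (b : 'I_m) : 'I_n := widen_ord mn b.
have repK : cancel rep blk by move=> b; apply: val_inj; rewrite /= modn_small.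
exists (cfgs blk rep); split; first exact: (card_cfgs repK (Ordinal m_gt0)).
rewrite -[leqRHS]maxnn; apply: maxdeg_cfgs => // b.
have div_lt (i : 'I_n) : i %/ m < m by rewrite ltn_divLR // (leq_trans (ltn_ord i)).
pose quo (i : 'I_n) : 'I_m := Ordinal (div_lt i).
rewrite -(@card_in_imset _ _ quo); first by apply: leq_trans (max_card _) _; rewrite card_ord.
move=> i j; rewrite !inE => /eqP ib /eqP jb /(congr1 val) /= ij.
apply: val_inj; rewrite /= (divn_eq i m) (divn_eq j m) ij.
by move/(congr1 val): ib; move/(congr1 val): jb => /= -> ->.
Qed.

Lemma exists_ceil_sqrt n : 0 < n ->
  exists m, [/\ 0 < m, m <= n, n <= m * m & m.-1 * m.-1 < n].
Proof.
move=> n_gt0; have : exists m, n <= m * m by exists n; nia.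
case/ex_minnP => m nmm m_min.
have m_gt0 : 0 < m by nia.
have lt_n : m.-1 * m.-1 < n.
  by rewrite ltnNge; apply/negP => /m_min; rewrite -ltnS prednK // ltnn.
by exists m; split => //; nia.
Qed.

Lemma natpowE a b : Nat.pow a b = a ^ b.
Proof. by elim: b => [|b IHb] //=; rewrite expnS -IHb multE. Qed.

(* Restore the notations, which the algebra imports override: Stdlib's
   [^] on nat, and [%R] for [R_scope]. *)
From mathcomp Require Import all_boot.
From Stdlib Require Import Reals.
Delimit Scope R_scope with R.

Theorem theorem3p1 :
  (forall (n : nat), (2 <= n)%N ->
     forall S : {set cube n}, (2 ^ n.-1 + 1 <= #|S|)%N ->
       exists v : cube n, v \in S /\
         (INR (deg S v) >
            / 2 * log2 (INR n) - / 2 * log2 (log2 (INR n)) + / 2)%R)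
  /\
  (forall (n : nat), (1 <= n)%N ->
     exists S : {set cube n}, #|S| = (2 ^ n.-1 + 1)%N /\
       (INR (maxdeg S) < sqrt (INR n) + 1)%R).
Proof.
split=> n.
- move=> n_ge2 S; rewrite natpowE addn1 => HS.
  have [x xS deg_x] := huang_sqrt HS.
  have n_ge2R : (2 <= INR n)%R by apply: two_le_INR; apply/ssrnat.leP.
  exists x; split=> //.
  exact: Rlt_le_trans (half_log2_bound_lt_sqrt _ n_ge2R) deg_x.
- move=> n_gt0.
  have [m [m_gt0 mn nmm lt_n]] := exists_ceil_sqrt n_gt0.
  have [S [cardS degS]] := exists_cfgs_mod m_gt0 mn nmm.
  exists S; split; first by rewrite natpowE.
  apply: Rle_lt_trans (le_INR _ _ (elimT ssrnat.leP degS)) _.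
  by rewrite -(prednK m_gt0); apply: INR_lt_sqrt_add1; apply/ssrnat.ltP.
Qed.
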